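(* Let $m,n\ge 2$ be integers with $(m,n)\ne(2,2)$, let $K_{m,n}$ be the complete bipartite graph with parts of sizes $m$ and $n$, and let $I_{K_{m,n}}$ be its toric ideal over a field $K$. Then $\mathrm{Split}(I_{K_{m,n}})=\mathrm{Split}_{\mathrm{rad}}(I_{K_{m,n}})=3$.
   Context: $K_{m,n}$ has vertex set $\{x_1,\ldots,x_m\}\cup\{y_1,\ldots,y_n\}$ and edges $b_{ij}=\{x_i,y_j\}$ for all $i,j$. For a graph $G$ with vertices $v_1,\ldots,v_N$ and edges $e_1,\ldots,e_M$, the toric ideal $I_G\subset K[e_1,\ldots,e_M]$ is the kernel of $e_k\mapsto t_it_j$ where $e_k=\{v_i,v_j\}$, i.e. the toric ideal of the configuration $\{{\bf a}_e\}$ with ${\bf a}_e\in\{0,1\}^N$ the indicator vector of the two endpoints of $e$. For a toric ideal $I_A$ (of a configuration $A$ of integer vectors with $\ker_{\mathbb{Z}}(A)\cap\mathbb{N}^M=\{{\bf 0}\}$) in $K[x_1,\ldots,x_M]$: $\mathrm{Split}(I_A)$ is the smallest integer $s$ such that there exist toric ideals $I_{A_1},\ldots,I_{A_s}$ in the same polynomial ring with $I_A=I_{A_1}+\cdots+I_{A_s}$ and $I_{A_i}\ne I_A$ for all $i$; $\mathrm{Split}_{\mathrm{rad}}(I_A)$ is the smallest integer $r$ such that there exist toric ideals $I_{A_1},\ldots,I_{A_r}$ with $I_A=\mathrm{rad}(I_{A_1}+\cdots+I_{A_r})$ and $I_{A_i}\ne I_A$ for all $i$. *)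

From HB Require Import structures.
From mathcomp Require Import all_boot all_order all_algebra.
From mathcomp Require Import mpoly.
Set Implicit Arguments. Unset Strict Implicit. Unset Printing Implicit Defensive.
Import GRing.Theory.
Local Open Scope ring_scope.

(* A configuration of M integer vectors in Z^d: column k is (A k). *)
Definition config (M d : nat) := 'I_M -> 'I_d -> int.

Definition config_mul (M d : nat) (A : config M d) (u : 'I_M -> nat) (r : 'I_d) : int :=
  \sum_(k < M) A k r * (u k)%:Z.

Definition pointed_config (M d : nat) (A : config M d) : Prop :=
  forall u : 'I_M -> nat, (forall r, config_mul A u r = 0) -> forall k, u k = 0%N.

(* Toric ideal I_A in K[x_1..x_M]: the kernel of x_k |-> t^{a_k}.
   Since x^u |-> t^{A u}, f is in the kernel iff for every b in Z^d the
   coefficients of f on the monomials u with A u = b sum to zero. *)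
Definition toric_ideal (K : fieldType) (M d : nat) (A : config M d)
  (f : {mpoly K[M]}) : Prop :=
  forall b : 'I_d -> int,
    \sum_(u <- msupp f | [forall r, config_mul A (fun k => u k) r == b r]) f@_u = 0.

Definition same_set (T : Type) (P Q : T -> Prop) : Prop := forall x, P x <-> Q x.

Definition is_toric (K : fieldType) (M : nat) (I : {mpoly K[M]} -> Prop) : Prop :=
  exists d (A : config M d), pointed_config A /\ same_set I (toric_ideal A).

Definition ideal_sum (K : fieldType) (M s : nat) (J : 'I_s -> {mpoly K[M]} -> Prop)
  (f : {mpoly K[M]}) : Prop :=
  exists g : 'I_s -> {mpoly K[M]}, (forall i, J i (g i)) /\ f = \sum_(i < s) g i.

Definition rad (K : fieldType) (M : nat) (I : {mpoly K[M]} -> Prop)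
  (f : {mpoly K[M]}) : Prop := exists k : nat, I (f ^+ k).

Definition splits_into (K : fieldType) (M : nat) (I : {mpoly K[M]} -> Prop) (s : nat) : Prop :=
  exists J : 'I_s -> {mpoly K[M]} -> Prop,
    (forall i, is_toric (J i)) /\ (forall i, ~ same_set (J i) I) /\
    same_set I (ideal_sum J).

Definition rad_splits_into (K : fieldType) (M : nat) (I : {mpoly K[M]} -> Prop) (s : nat) : Prop :=
  exists J : 'I_s -> {mpoly K[M]} -> Prop,
    (forall i, is_toric (J i)) /\ (forall i, ~ same_set (J i) I) /\
    same_set I (rad (ideal_sum J)).

Definition Split_eq (K : fieldType) (M : nat) (I : {mpoly K[M]} -> Prop) (s : nat) : Prop :=
  splits_into I s /\ forall s', splits_into I s' -> (s <= s')%N.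

Definition Split_rad_eq (K : fieldType) (M : nat) (I : {mpoly K[M]} -> Prop) (s : nat) : Prop :=
  rad_splits_into I s /\ forall s', rad_splits_into I s' -> (s <= s')%N.

Definition graph_config (N M : nat) (ends : 'I_M -> nat * nat) : config M N :=
  fun k v => ((nat_of_ord v == (ends k).1) + (nat_of_ord v == (ends k).2))%:Z.

(* K_{m,n}: vertices x_1..x_m are 0..m-1, y_1..y_n are m..m+n-1;
   edge b_ij (0-based i<m, j<n) is variable number i*n + j. *)
Definition Kmn_ends (m n : nat) (k : 'I_(m * n)) : nat * nat :=
  ((k %/ n)%N, (m + k %% n)%N).

Definition Kmn_config (m n : nat) : config (m * n) (m + n) :=
  @graph_config (m + n)%N (m * n)%N (@Kmn_ends m n).

Definition toric_ideal_Kmn (K : fieldType) (m n : nat) : {mpoly K[m * n]} -> Prop :=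
  toric_ideal (@Kmn_config m n).

(** The toric ideal I of K_{m,n} is spanned by the binomials x^u - x^v with u and v in the
    same fibre, and any two points of a fibre are joined by moves along 2x2 minors
    x_ij x_pl - x_il x_pj, so the minors generate I. Being the kernel of a monomial map into a
    polynomial ring, I is radical.

    Upper bound: choose three edges a_0, a_1, a_2 at a vertex of degree at least 3 and let J_c
    be the toric ideal of the configuration enlarged by one row recording the exponent of a_c.
    Each J_c is strictly smaller than I, and a minor meets a vertex in at most two edges, so it
    avoids some a_c and lies in J_c; hence I = J_0 + J_1 + J_2 = rad (J_0 + J_1 + J_2).

    Lower bound: for a minor x^u - x^v, the fibre of t u consists of the points q u + s v with
    q + s = t, so a toric ideal inside I that misses the minor has zero coefficient at x^(t u).
    Comparing leading terms, if a power of a minor lies in a sum of toric ideals contained in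
    I, then the minor lies in one of them. With two ideals J_0, J_1, "the minor (i, p, j, l)
    lies in J_c" is a partial equivalence in the columns j, l for fixed rows, and then in the
    row pairs; two partial equivalences covering all pairs cannot both be proper, so some J_c
    contains all minors and equals I. *)

From Pilot Require Import Defs.
From HB Require Import structures.
From mathcomp Require Import all_boot all_order all_algebra.
From mathcomp Require Import mpoly.
From mathcomp Require Import zify.
From Stdlib Require Import Classical RelationClasses.
Set Implicit Arguments. Unset Strict Implicit. Unset Printing Implicit Defensive.
Import GRing.Theory.

Lemma ltn_sum (I : finType) (P : pred I) (a b : I -> nat) j :
  (forall k, P k -> a k <= b k) -> P j -> a j < b j ->
  \sum_(k | P k) a k < \sum_(k | P k) b k.
Proof.
move=> le_ab Pj lt_j; rewrite (bigD1 j) //= [X in _ < X](bigD1 j) //=.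
have : \sum_(k | P k && (k != j)) a k <= \sum_(k | P k && (k != j)) b k.
  by apply: leq_sum => k /andP[Pk _]; apply: le_ab.
lia.
Qed.

Lemma exists_ltn_of_sum_eq (I : finType) (P : pred I) (a b : I -> nat) j :
  \sum_(k | P k) a k = \sum_(k | P k) b k -> P j -> b j < a j ->
  exists2 k, P k & a k < b k.
Proof.
move=> eq_ab Pj lt_j; apply: NNPP => none.
suff : \sum_(k | P k) b k < \sum_(k | P k) a k by rewrite eq_ab ltnn.
apply: ltn_sum Pj lt_j => k Pk; rewrite leqNgt; apply/negP => lt_k.
by apply: none; exists k.
Qed.

Lemma per_cover2 (T : Type) (R1 R2 : T -> T -> Prop) : PER R1 -> PER R2 ->
  (forall x y, R1 x y \/ R2 x y) -> (forall x y, R1 x y) \/ (forall x y, R2 x y).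
Proof.
move=> P1 P2 cover.
have [|/not_all_ex_not[a /not_all_ex_not[b nR1ab]]] := classic (forall x y, R1 x y).
  by left.
right; have R2ab : R2 a b by case: (cover a b).
have R2_a x : R2 x a.
  case: (cover x a) => // R1xa; case: (cover x b) => [R1xb|R2xb].
    by exfalso; apply: nR1ab; transitivity x; first symmetry.
  by transitivity b; last symmetry.
by move=> x y; transitivity a; last symmetry.
Qed.

Lemma exists_neq_ord N (i : 'I_N) : 1 < N -> exists p : 'I_N, p != i.
Proof.
move=> N_gt1; pose o0 := Ordinal (ltnW N_gt1); pose o1 := Ordinal N_gt1.
by have [->|] := eqVneq i o0; [exists o1 | exists o0; rewrite eq_sym].
Qed.

Lemma inj_avoid2 (T : finType) (s : 'I_3 -> T) x y :
  injective s -> exists c, (s c != x) && (s c != y).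
Proof.
move=> s_inj; apply: NNPP => none.
have : #|[set s c | c : 'I_3]| <= #|[set x; y]|.
  apply/subset_leq_card/subsetP => _ /imsetP[c _ ->]; rewrite !inE.
  by apply: contraT => /norP[? ?]; exfalso; apply: none; exists c; apply/andP.
by rewrite card_imset // card_ord cards2; case: (x != y).
Qed.

Lemma lem_addU M (v : 'X_{1..M}) a b :
  a != b -> 0 < v a -> 0 < v b -> (U_(a) + U_(b) <= v)%MM.
Proof.
move=> ab va vb; apply/mnm_lepP => k; rewrite mnmDE !mnm1E.
by have [<-|_] := eqVneq a k; [rewrite [b == _]eq_sym (negbTE ab) | case: eqP => // <-].
Qed.

Lemma mdeg_subm_exchange M (u v : 'X_{1..M}) (a b c e : 'I_M) :
  a != b -> c != a -> c != b -> u a < v a -> u b < v b -> v c < u c ->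
  mdeg (u - (v - (U_(a) + U_(b)) + (U_(c) + U_(e))))%MM < mdeg (u - v)%MM.
Proof.
move=> ab ca cb lta ltb ltc; rewrite !mdegE; apply: (ltn_sum (j := c)) => // [k _|];
  rewrite !mnmBE !mnmDE !mnmBE !mnmDE !mnm1E; last first.
  by rewrite eq_sym (negbTE ca) eq_sym (negbTE cb) eqxx; lia.
have [<-|_] := eqVneq a k; first by rewrite [b == a]eq_sym (negbTE ab); lia.
have [<-|_] := eqVneq b k; lia.
Qed.

Lemma mnm_supp_sum M (w : 'X_{1..M}) (s : seq 'I_M) : uniq s ->
  (forall k, k \notin s -> w k = 0) -> w = (\sum_(k <- s) U_(k) *+ w k)%MM.
Proof.
move=> uniq_s w0; apply/mnmP => k; rewrite mnm_sumE.
have [ks|ks] := boolP (k \in s); last first.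
  rewrite w0 // big1_seq // => x /andP[_ xs]; rewrite mulmnE mnm1E.
  by case: eqP => // xk; move: ks; rewrite -xk xs.
rewrite (bigD1_seq k) //= big1_seq => [|x /andP[xk _]]; first by rewrite mulmnE mnm1E eqxx; lia.
by rewrite mulmnE mnm1E (negbTE xk).
Qed.

Local Open Scope ring_scope.

(** * Toric ideals *)

Section ToricIdeal.
Variables (K : fieldType) (M d : nat) (A : config M d).

Definition adeg (u : 'X_{1..M}) : 'I_d -> int := config_mul A (fun k => u k).

Lemma adegD u v r : adeg (u + v)%MM r = adeg u r + adeg v r.
Proof.
rewrite /adeg /config_mul -big_split; apply: eq_bigr => k _.
by rewrite mnmDE PoszD mulrDr.
Qed.

Lemma adegMn u t r : adeg (u *+ t)%MM r = adeg u r *+ t.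
Proof.
rewrite /adeg /config_mul -sumrMnl; apply: eq_bigr => k _.
by rewrite mulmnE PoszM mulrA -mulr_natr natz.
Qed.

Lemma adegU a r : adeg U_(a)%MM r = A a r.
Proof.
rewrite /adeg /config_mul (bigD1 a) //= big1 ?addr0 => [|k ka].
  by rewrite mnm1E eqxx mulr1.
by rewrite mnm1E eq_sym (negbTE ka) mulr0.
Qed.

Lemma big_msupp_sub (f : {mpoly K[M]}) (P : pred 'X_{1..M}) s :
  uniq s -> {subset msupp f <= s} ->
  \sum_(u <- msupp f | P u) f@_u = \sum_(u <- s | P u) f@_u.
Proof.
move=> uniq_s sub; apply: perm_big_supp; apply: uniq_perm; rewrite ?filter_uniq ?msupp_uniq //.
move=> u; rewrite !mem_filter -mcoeff_msupp.
by case: (boolP (u \in msupp f)) => //= /sub ->.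
Qed.

Lemma toric_ideal0 : toric_ideal A (0 : {mpoly K[M]}).
Proof. by move=> b; rewrite msupp0 big_nil. Qed.

Lemma toric_idealD (f g : {mpoly K[M]}) :
  toric_ideal A f -> toric_ideal A g -> toric_ideal A (f + g).
Proof.
move=> fI gI b; set s := undup (msupp f ++ msupp g).
have sub_s h : {subset msupp h <= msupp f ++ msupp g} -> {subset msupp h <= s}.
  by move=> sub x /sub; rewrite mem_undup.
rewrite (@big_msupp_sub _ _ s) ?undup_uniq //; last exact/sub_s/msuppD_le.
under eq_bigr do rewrite mcoeffD.
rewrite big_split /= -!(@big_msupp_sub _ _ s) ?undup_uniq ?fI ?gI ?addr0 //;
  by apply: sub_s => x xs; rewrite mem_cat xs ?orbT.
Qed.

Lemma toric_idealZ c (f : {mpoly K[M]}) : toric_ideal A f -> toric_ideal A (c *: f).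
Proof.
move=> fI b; rewrite (@big_msupp_sub _ _ (msupp f)) ?msupp_uniq //; last exact: msuppZ_le.
under eq_bigr do rewrite mcoeffZ.
by rewrite -mulr_sumr fI mulr0.
Qed.

Lemma toric_idealB (f g : {mpoly K[M]}) :
  toric_ideal A f -> toric_ideal A g -> toric_ideal A (f - g).
Proof. by move=> fI gI; rewrite -scaleN1r; apply/toric_idealD/toric_idealZ. Qed.

Lemma toric_ideal_coef_eq0 (f : {mpoly K[M]}) w : toric_ideal A f ->
  (forall x, x \in msupp f -> adeg x =1 adeg w -> x = w) -> f@_w = 0.
Proof.
move=> fI w_alone; have [wf|/memN_msupp_eq0//] := boolP (w \in msupp f).
have := fI (adeg w); rewrite big_mkcond (bigD1_seq w) ?msupp_uniq //= ifT; last exact/forallP.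
rewrite big1_seq ?addr0 // => x /andP[xw xf]; case: ifP => // /forallP x_fib.
by move: xw; rewrite (w_alone x xf (fun r => eqP (x_fib r))) eqxx.
Qed.

Lemma binomial_fiber_sum (u v : 'X_{1..M}) (P : pred 'X_{1..M}) : u != v ->
  \sum_(w <- msupp ('X_[u] - 'X_[v] : {mpoly K[M]}) | P w) ('X_[u] - 'X_[v] : {mpoly K[M]})@_w
  = (P u)%:R - (P v)%:R.
Proof.
move=> uv; rewrite (@big_msupp_sub _ _ [:: u; v]); first last.
- by move=> x /msuppB_le; rewrite mem_cat !msuppX !inE => /orP[] ->; rewrite ?orbT.
- by rewrite /= inE uv.
rewrite !big_cons big_nil !mcoeffB !mcoeffX !eqxx eq_sym (negbTE uv).
by case: (P u); case: (P v); rewrite /= ?subr0 ?sub0r ?addr0 ?add0r.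
Qed.

Lemma toric_ideal_binomialP (u v : 'X_{1..M}) :
  toric_ideal A ('X_[u] - 'X_[v] : {mpoly K[M]}) <-> adeg u =1 adeg v.
Proof.
have [->|uv] := eqVneq u v; first by rewrite subrr; split=> // _; apply: toric_ideal0.
split=> [uvI | fib b]; last first.
  by rewrite binomial_fiber_sum // (eq_forallb (fun r => congr1 (eq_op^~ (b r)) (fib r))) subrr.
have := uvI (adeg u); rewrite binomial_fiber_sum //=.
have -> : [forall r, config_mul A (fun k => u k) r == adeg u r] by apply/forallP.
case: forallP => [v_fib _ r | _]; first exact/esym/eqP/v_fib.
by move/eqP; rewrite subr0 oner_eq0.
Qed.

Lemma toric_ideal_ind (P : {mpoly K[M]} -> Prop) :
  P 0 -> (forall f g, P f -> P g -> P (f + g)) ->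
  (forall c u v, adeg u =1 adeg v -> P (c *: ('X_[u] - 'X_[v]))) ->
  forall f, toric_ideal A f -> P f.
Proof.
move=> P0 PD Pbin f; have [N] := ubnP (size (msupp f)); elim: N f => // N IH f.
move=> size_f fI; have [->//|f0] := eqVneq f 0.
set w := mlead f; have wf : w \in msupp f by apply: mlead_supp.
have [w' w'f [w'w fib]] : exists2 w', w' \in msupp f & w' != w /\ adeg w' =1 adeg w.
  apply: NNPP => none; move: wf; rewrite mcoeff_msupp (toric_ideal_coef_eq0 fI) ?eqxx //.
  by move=> x xf fib; apply/eqP; apply: contra_notT none => xw; exists x.
set g := f@_w *: ('X_[w] - 'X_[w']).
have gI : toric_ideal A g by apply/toric_idealZ/toric_ideal_binomialP => r; rewrite fib.
rewrite -(subrK g f); apply: PD; last by apply: Pbin => r; rewrite fib.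
apply: IH; last exact: toric_idealB.
have sub : {subset msupp (f - g) <= rem w (msupp f)}.
  move=> x; rewrite (mem_rem_uniq _ (msupp_uniq f)) inE !mcoeff_msupp.
  rewrite mcoeffB mcoeffZ mcoeffB !mcoeffX.
  have [->|xw] := eqVneq x w; first by rewrite (negbTE w'w) subr0 mulr1 subrr eqxx.
  rewrite sub0r /=; have [<-|xw'] := eqVneq w' x.
    by rewrite -mcoeff_msupp w'f.
  by rewrite oppr0 mulr0 subr0.
apply: leq_ltn_trans (uniq_leq_size (msupp_uniq _) sub) _.
by rewrite size_rem // -ltnS prednK //; case: (msupp f) wf.
Qed.

End ToricIdeal.

Lemma toric_ideal_sub_fiber (K : fieldType) M d d' (A : config M d) (B : config M d') u v :
  (forall f : {mpoly K[M]}, toric_ideal A f -> toric_ideal B f) ->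
  adeg A u =1 adeg A v -> adeg B u =1 adeg B v.
Proof. by move=> AB /(toric_ideal_binomialP K) /AB /toric_ideal_binomialP. Qed.

Section NonnegConfig.
Variables (K : fieldType) (M d : nat) (A : config M d).
Hypothesis A_ge0 : forall k r, 0 <= A k r.

Definition config_col k : 'X_{1..d} := [multinom `|A k r|%N | r < d].
Definition config_mnm (u : 'X_{1..M}) : 'X_{1..d} := (\sum_(k < M) config_col k *+ u k)%MM.

Definition monomial_map (f : {mpoly K[M]}) : {mpoly K[d]} :=
  mmap (@mpolyC d K) (fun k => 'X_[config_col k]) f.

Lemma adeg_config_mnm u r : adeg A u r = (config_mnm u r)%:Z.
Proof.
rewrite /adeg /config_mul mnm_sumE -natz natr_sum; apply: eq_bigr => k _.
by rewrite mulmnE mnmE natrM !natz gez0_abs.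
Qed.

Lemma config_mnm_eq u b : (config_mnm u == b) = [forall r, adeg A u r == (b r)%:Z].
Proof.
apply/eqP/forallP => [<- r | ub]; first by rewrite adeg_config_mnm.
by apply/mnmP => r; move: (ub r); rewrite adeg_config_mnm eqz_nat => /eqP.
Qed.

Lemma monomial_map_coef f b :
  (monomial_map f)@_b = \sum_(u <- msupp f | config_mnm u == b) f@_u.
Proof.
rewrite /monomial_map /mmap raddf_sum [RHS]big_mkcond /=; apply: eq_bigr => u _.
rewrite /mmap1 mprodXnE mul_mpolyC mcoeffZ mcoeffX.
by case: eqP; rewrite ?mulr1 ?mulr0.
Qed.

Lemma toric_ideal_monomial_mapP f : toric_ideal A f <-> monomial_map f = 0.
Proof.
split=> [fI | f0 b].
  apply/mpolyP => b; rewrite monomial_map_coef mcoeff0 -[RHS](fI (fun r => (b r)%:Z)).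
  by apply: eq_bigl => u; rewrite config_mnm_eq.
have [/forallP b_ge0 | /forallPn[r br]] := boolP [forall r, 0 <= b r]; last first.
  rewrite big1 // => u /forallP/(_ r)/eqP ub; move: br.
  by rewrite -ub -[config_mul _ _ r]/(adeg A u r) adeg_config_mnm.
pose b' : 'X_{1..d} := [multinom `|b r|%N | r < d].
have := congr1 (mcoeff b') f0; rewrite monomial_map_coef mcoeff0 => b'0.
rewrite -[RHS]b'0.
by apply: eq_bigl => u; rewrite config_mnm_eq; apply: eq_forallb => r; rewrite mnmE gez0_abs.
Qed.

Lemma toric_ideal_radical (f : {mpoly K[M]}) k : toric_ideal A (f ^+ k) -> toric_ideal A f.
Proof.
rewrite !toric_ideal_monomial_mapP /monomial_map rmorphXn => /eqP.
by rewrite expf_eq0 => /andP[_ /eqP].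
Qed.

End NonnegConfig.

Section MarkedConfig.
Variables (M d : nat) (A : config M d) (a : 'I_M).

Definition mark_config : config M d.+1 :=
  fun k r => if unlift ord_max r is Some r' then A k r' else (k == a)%:Z.

Lemma config_mul_mark_lift (u : 'I_M -> nat) r :
  config_mul mark_config u (lift ord_max r) = config_mul A u r.
Proof. by apply: eq_bigr => k _; rewrite /mark_config liftK. Qed.

Lemma config_mul_mark_max (u : 'I_M -> nat) : config_mul mark_config u ord_max = (u a)%:Z.
Proof.
rewrite /config_mul (bigD1 a) //= big1 => [|k ka]; rewrite /mark_config unlift_none.
  by rewrite eqxx mul1r addr0.
by rewrite (negbTE ka) mul0r.
Qed.

Lemma mark_config_pointed : pointed_config A -> pointed_config mark_config.
Proof. by move=> A_pt u u0; apply: A_pt => r; rewrite -config_mul_mark_lift u0. Qed.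

Lemma adeg_markP u v :
  adeg mark_config u =1 adeg mark_config v <-> adeg A u =1 adeg A v /\ u a = v a.
Proof.
split=> [fib | [fib uva] r].
  split=> [r|]; first by have := fib (lift ord_max r); rewrite /adeg !config_mul_mark_lift.
  by have := fib ord_max; rewrite /adeg !config_mul_mark_max => -[].
case: (unliftP ord_max r) => [r'|] ->; first by rewrite /adeg !config_mul_mark_lift; apply: fib.
by rewrite /adeg !config_mul_mark_max uva.
Qed.

Lemma toric_ideal_mark_sub (K : fieldType) (f : {mpoly K[M]}) :
  toric_ideal mark_config f -> toric_ideal A f.
Proof.
apply: toric_ideal_ind => [|g h|c u v /adeg_markP[fib _]]; first exact: toric_ideal0.
  exact: toric_idealD.
exact/toric_idealZ/toric_ideal_binomialP.
Qed.

End MarkedConfig.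

Lemma is_toric0 (K : fieldType) M (J : {mpoly K[M]} -> Prop) : is_toric J -> J 0.
Proof. by case=> d [A [_ JA]]; apply/(JA 0).2/toric_ideal0. Qed.

Lemma ideal_sum_single (K : fieldType) M s (J : 'I_s -> {mpoly K[M]} -> Prop) c f :
  (forall c', J c' 0) -> J c f -> ideal_sum J f.
Proof.
move=> J0 Jf; exists (fun c' => if c' == c then f else 0); split=> [c'|].
  by case: eqP => [->|].
by rewrite (bigD1 c) //= eqxx big1 ?addr0 // => c' /negbTE ->.
Qed.

(** * The toric ideal of K_{m,n} *)

Section Kmn.
Variables m n : nat.
Hypothesis n_gt0 : (0 < n)%N.
Local Notation KA := (@Kmn_config m n).

Lemma krow_subproof (k : 'I_(m * n)) : (k %/ n < m)%N.
Proof. by rewrite ltn_divLR // ltn_ord. Qed.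

Lemma idx_subproof (i : 'I_m) (j : 'I_n) : (i * n + j < m * n)%N.
Proof.
have lt_i : (i.+1 * n <= m * n)%N by rewrite leq_mul2r ltn_ord orbT.
by move: lt_i; rewrite mulSn; have := ltn_ord j; lia.
Qed.

Definition krow (k : 'I_(m * n)) : 'I_m := Ordinal (krow_subproof k).
Definition kcol (k : 'I_(m * n)) : 'I_n := Ordinal (ltn_pmod k n_gt0).
Definition idx (i : 'I_m) (j : 'I_n) : 'I_(m * n) := Ordinal (idx_subproof i j).

Lemma krow_idx i j : krow (idx i j) = i.
Proof. by apply: val_inj; rewrite /= divnMDl // divn_small ?addn0. Qed.

Lemma kcol_idx i j : kcol (idx i j) = j.
Proof. by apply: val_inj; rewrite /= modnMDl modn_small. Qed.

Lemma idx_krow_kcol k : idx (krow k) (kcol k) = k.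
Proof. by apply: val_inj; rewrite /= -divn_eq. Qed.

Lemma idx_inj i j i' j' : (idx i j == idx i' j') = (i == i') && (j == j').
Proof.
apply/eqP/andP => [e|[/eqP-> /eqP->] //].
by have := congr1 krow e; have := congr1 kcol e; rewrite !krow_idx !kcol_idx => -> ->.
Qed.

Lemma Kmn_configE k r : KA k r = ((r == lshift n (krow k)) + (r == rshift m (kcol k)))%N%:Z.
Proof. by []. Qed.

Lemma Kmn_config_ge0 k r : 0 <= KA k r.
Proof. by rewrite Kmn_configE. Qed.

Definition row_sum (u : 'I_(m * n) -> nat) (i : 'I_m) := (\sum_(k | krow k == i) u k)%N.
Definition col_sum (u : 'I_(m * n) -> nat) (j : 'I_n) := (\sum_(k | kcol k == j) u k)%N.

Lemma config_mul_Kmn_lshift u i : config_mul KA u (lshift n i) = (row_sum u i)%:Z.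
Proof.
rewrite /config_mul /row_sum -natz natr_sum [RHS]big_mkcond; apply: eq_bigr => k _.
rewrite Kmn_configE eq_lshift eq_lrshift addn0 eq_sym.
by case: eqP; rewrite /= ?natz; lia.
Qed.

Lemma config_mul_Kmn_rshift u j : config_mul KA u (rshift m j) = (col_sum u j)%:Z.
Proof.
rewrite /config_mul /col_sum -natz natr_sum [RHS]big_mkcond; apply: eq_bigr => k _.
rewrite Kmn_configE eq_rshift eq_rlshift add0n eq_sym.
by case: eqP; rewrite /= ?natz; lia.
Qed.

Lemma Kmn_fiber_row_sum (u v : 'X_{1..m * n}) :
  adeg KA u =1 adeg KA v -> row_sum u =1 row_sum v.
Proof. by move=> fib i; have := fib (lshift n i); rewrite /adeg !config_mul_Kmn_lshift => -[]. Qed.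

Lemma Kmn_fiber_col_sum (u v : 'X_{1..m * n}) :
  adeg KA u =1 adeg KA v -> col_sum u =1 col_sum v.
Proof. by move=> fib j; have := fib (rshift m j); rewrite /adeg !config_mul_Kmn_rshift => -[]. Qed.

Lemma leq_row_sum (u : 'I_(m * n) -> nat) k : (u k <= row_sum u (krow k))%N.
Proof. by rewrite /row_sum (bigD1 k) //= leq_addr. Qed.

Lemma leq_col_sum (u : 'I_(m * n) -> nat) k : (u k <= col_sum u (kcol k))%N.
Proof. by rewrite /col_sum (bigD1 k) //= leq_addr. Qed.

Lemma Kmn_config_pointed : pointed_config KA.
Proof.
move=> u u0 k; have := leq_row_sum u k.
by have := u0 (lshift n (krow k)); rewrite config_mul_Kmn_lshift => -[->]; rewrite leqn0 => /eqP.
Qed.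

Definition diag (i p : 'I_m) (j l : 'I_n) : 'X_{1..m * n} := (U_(idx i j) + U_(idx p l))%MM.

Lemma adeg_diag d (B : config (m * n) d) i p j l r :
  adeg B (diag i p j l) r = B (idx i j) r + B (idx p l) r.
Proof. by rewrite adegD !adegU. Qed.

Lemma diag_fiber i p j l : adeg KA (diag i p j l) =1 adeg KA (diag i p l j).
Proof.
move=> r; rewrite !adeg_diag !Kmn_configE !krow_idx !kcol_idx -!PoszD; congr Posz; lia.
Qed.

Lemma Kmn_move u v : adeg KA u =1 adeg KA v -> u != v ->
  exists i p j l w, v = (w + diag i p l j)%MM /\
    (mdeg (u - (w + diag i p j l)) < mdeg (u - v))%N.
Proof.
move=> fib uv; have rows := Kmn_fiber_row_sum fib; have cols := Kmn_fiber_col_sum fib.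
(* v is below u at k0, hence above u at some k1 in the row and some k2 in the column of k0;
   the move of the minor through k0, k1, k2 brings v closer to u. *)
have [k0 lt0] : exists k0, (v k0 < u k0)%N.
  have /existsP[k ne_k] : [exists k, u k != v k].
    apply: contraR uv => /existsPn eq_uv; apply/eqP/mnmP => k.
    by apply/eqP; rewrite -[_ == _]negbK eq_uv.
  case: ltngtP ne_k => // [lt_k _|lt_k _]; last by exists k.
  have [k' _ lt_k'] := exists_ltn_of_sum_eq (esym (rows (krow k))) (eqxx _) lt_k.
  by exists k'.
set i := krow k0; set j := kcol k0.
have [k1 /eqP row1 lt1] := exists_ltn_of_sum_eq (rows i) (eqxx _) lt0.
have [k2 /eqP col2 lt2] := exists_ltn_of_sum_eq (cols j) (eqxx _) lt0.
set l := kcol k1; set p := krow k2.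
have e0 : k0 = idx i j by rewrite idx_krow_kcol.
have e1 : k1 = idx i l by rewrite -row1 idx_krow_kcol.
have e2 : k2 = idx p j by rewrite -col2 idx_krow_kcol.
have lj : l != j by apply: contraTneq lt1 => lj; rewrite e1 lj -e0 -leqNgt ltnW.
have pi : p != i by apply: contraTneq lt2 => pi; rewrite e2 pi -e0 -leqNgt ltnW.
have k12 : k1 != k2 by rewrite e1 e2 idx_inj eq_sym (negbTE pi).
exists i, p, j, l, (v - diag i p l j)%MM; rewrite submK; last first.
  by rewrite /diag -e1 -e2 lem_addU //; lia.
split=> //; rewrite /diag -e0 -e1 -e2; apply: mdeg_subm_exchange => //.
  by rewrite e0 e1 idx_inj eqxx eq_sym (negbTE lj).
by rewrite e0 e2 idx_inj eq_sym (negbTE pi).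
Qed.

Lemma Kmn_binomial_ind (K : fieldType) (P : {mpoly K[m * n]} -> Prop) :
  P 0 -> (forall f g, P f -> P g -> P (f + g)) ->
  (forall w i p j l, P ('X_[w + diag i p j l] - 'X_[w + diag i p l j])) ->
  forall u v, adeg KA u =1 adeg KA v -> P ('X_[u] - 'X_[v]).
Proof.
move=> P0 PD Pmove u v; have [N] := ubnP (mdeg (u - v)); elim: N v => // N IH v.
move=> lt_N fib; have [->|uv] := eqVneq u v; first by rewrite subrr.
have [i [p [j [l [w [ev lt_uv]]]]]] := Kmn_move fib uv; subst v.
have -> : 'X_[u] - 'X_[w + diag i p l j] = ('X_[u] - 'X_[w + diag i p j l])
    + ('X_[w + diag i p j l] - 'X_[w + diag i p l j]) :> {mpoly K[m * n]}.
  by rewrite addrA subrK.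
apply: PD (Pmove w i p j l); apply: IH; first by move: lt_uv lt_N; lia.
by move=> r; rewrite fib [LHS]adegD [RHS]adegD (diag_fiber i p l j r).
Qed.

Lemma toric_ideal_Kmn_ind (K : fieldType) (P : {mpoly K[m * n]} -> Prop) :
  P 0 -> (forall f g, P f -> P g -> P (f + g)) -> (forall c f, P f -> P (c *: f)) ->
  (forall w i p j l, P ('X_[w + diag i p j l] - 'X_[w + diag i p l j])) ->
  forall f, toric_ideal KA f -> P f.
Proof.
move=> P0 PD PZ Pmove; apply: toric_ideal_ind => // c u v fib.
by apply/PZ; apply: Kmn_binomial_ind.
Qed.

Lemma Kmn_config_idx_lshift i j r : KA (idx i j) (lshift n r) = (r == i)%:Z.
Proof. by rewrite Kmn_configE eq_lshift eq_lrshift krow_idx addn0. Qed.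

Lemma Kmn_config_idx_rshift i j c : KA (idx i j) (rshift m c) = (c == j)%:Z.
Proof. by rewrite Kmn_configE eq_rshift eq_rlshift kcol_idx. Qed.

Lemma Kmn_fiber_diag i p j l t w : i != p -> j != l ->
  adeg KA w =1 adeg KA (diag i p j l *+ t) ->
  exists q s, (q + s = t)%N /\ w = (diag i p j l *+ q + diag i p l j *+ s)%MM.
Proof.
move=> ip jl fib.
have [ip' pi'] : (i == p) = false /\ (p == i) = false by rewrite [p == i]eq_sym (negbTE ip).
have [jl' lj'] : (j == l) = false /\ (l == j) = false by rewrite [l == j]eq_sym (negbTE jl).
have row r : (row_sum w r)%:Z = ((r == i) + (r == p))%:Z *+ t.
  rewrite -config_mul_Kmn_lshift -/(adeg KA w (lshift n r)) fib adegMn adeg_diag.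
  by rewrite !Kmn_config_idx_lshift PoszD.
have col c : (col_sum w c)%:Z = ((c == j) + (c == l))%:Z *+ t.
  rewrite -config_mul_Kmn_rshift -/(adeg KA w (rshift m c)) fib adegMn adeg_diag.
  by rewrite !Kmn_config_idx_rshift PoszD.
set s4 := [:: idx i j; idx p l; idx i l; idx p j].
have s4_uniq : uniq s4 by rewrite /= !inE !idx_inj !eqxx ip' pi' jl' lj'.
have w_supp k : k \notin s4 -> w k = 0%N.
  rewrite -[k in k \notin _]idx_krow_kcol !inE !idx_inj.
  have := leq_row_sum w k; have := leq_col_sum w k; move: (row (krow k)) (col (kcol k)).
  by case: (krow k == i); case: (krow k == p); case: (kcol k == j); case: (kcol k == l) => //=; lia.
have ew := mnm_supp_sum s4_uniq w_supp.
have := fib (lshift n i); have := fib (lshift n p); have := fib (rshift m j).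
rewrite {1 2 3}ew !big_cons big_nil addm0 !adegD !adegMn !adegU !adeg_diag.
rewrite !Kmn_config_idx_lshift !Kmn_config_idx_rshift !eqxx ?ip' ?pi' ?jl' ?lj' => e_j e_p e_i.
have e_pl : w (idx p l) = w (idx i j) by lia.
have e_pj : w (idx p j) = w (idx i l) by lia.
exists (w (idx i j)), (w (idx i l)); split; first lia.
rewrite {1}ew; apply/mnmP => k; rewrite /diag !big_cons big_nil addm0.
by rewrite !mnmDE !mulmnE !mnmDE !mnm1E e_pl e_pj; lia.
Qed.

Lemma toric_ideal_coef_diag (K : fieldType) d (B : config (m * n) d) (g : {mpoly K[m * n]})
    i p j l t :
  (forall f : {mpoly K[m * n]}, toric_ideal B f -> toric_ideal KA f) ->
  i != p -> j != l -> ~ adeg B (diag i p j l) =1 adeg B (diag i p l j) ->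
  toric_ideal B g -> g@_(diag i p j l *+ t)%MM = 0.
Proof.
move=> BKA ip jl not_fib gI; apply: (toric_ideal_coef_eq0 gI) => x _ fibB.
have [q [s [qst ex]]] := Kmn_fiber_diag ip jl (toric_ideal_sub_fiber BKA fibB).
subst t x; case: s fibB => [|s] fibB; first by rewrite mulm0n addm0 addn0.
case: not_fib => r; have := fibB r; rewrite adegD !adegMn mulrnDr => /addrI.
by move/eqP; rewrite Num.Theory.eqr_pMn2r // eq_sym => /eqP.
Qed.

Definition minor (K : fieldType) i p j l : {mpoly K[m * n]} :=
  'X_[diag i p j l] - 'X_[diag i p l j].

Lemma Kmn_minor_in_some (K : fieldType) s (J : 'I_s -> {mpoly K[m * n]} -> Prop) i p j l :
  (forall c, is_toric (J c)) -> (forall c f, J c f -> toric_ideal KA f) ->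
  i != p -> j != l -> Defs.rad (ideal_sum J) (minor K i p j l) ->
  exists c, J c (minor K i p j l).
Proof.
move=> Jtoric JKA ip jl [k [g [gJ sum_g]]]; apply: NNPP => none.
set M := minor K i p j l in none sum_g *.
have uv : diag i p j l != diag i p l j.
  apply/negP => /eqP/mnmP/(_ (idx i j)); rewrite !mnmDE !mnm1E !idx_inj !eqxx.
  by rewrite [p == i]eq_sym [l == j]eq_sym (negbTE ip) (negbTE jl).
have M0 : M != 0.
  apply/eqP => /(congr1 (mcoeff (diag i p j l))); rewrite mcoeffB !mcoeffX eqxx mcoeff0.
  by rewrite eq_sym (negbTE uv) subr0 => /eqP; rewrite oner_eq0.
have lead_M : (mlead M == diag i p j l) || (mlead M == diag i p l j).
  by have := mlead_supp M0 => /msuppB_le; rewrite mem_cat !msuppX !inE.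
have : (M ^+ k)@_(mlead M *+ k)%MM != 0.
  rewrite -mleadX_proper; last by apply/mulfI; rewrite mleadc_eq0.
  by rewrite mleadc_eq0 expf_neq0.
rewrite sum_g raddf_sum big1 ?eqxx // => c _.
case: (Jtoric c) => d [B [_ JB]].
have BKA (f : {mpoly K[m * n]}) : toric_ideal B f -> toric_ideal KA f.
  by move=> /(JB f).2; apply: JKA.
have not_fib : ~ adeg B (diag i p j l) =1 adeg B (diag i p l j).
  by move=> /(toric_ideal_binomialP K) /(JB _).2 JM; apply: none; exists c.
have gB : toric_ideal B (g c) := (JB _).1 (gJ c).
case/orP: lead_M => /eqP ->; first exact: toric_ideal_coef_diag not_fib gB.
have lj : l != j by rewrite eq_sym.
exact: toric_ideal_coef_diag BKA ip lj (fun h => not_fib (fsym h)) gB.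
Qed.

Lemma diag_fiber_col_per d (B : config (m * n) d) i p :
  PER (fun j l => adeg B (diag i p j l) =1 adeg B (diag i p l j)).
Proof.
split=> [j l fib | j l q fib1 fib2] r; first by rewrite fib.
by move: (fib1 r) (fib2 r); rewrite !adeg_diag; lia.
Qed.

Lemma diag_fiber_row_per d (B : config (m * n) d) :
  PER (fun i p => forall j l, adeg B (diag i p j l) =1 adeg B (diag i p l j)).
Proof.
split=> [i p fib | i p q fib1 fib2] j l r; first by move: (fib j l r); rewrite !adeg_diag; lia.
by move: (fib1 j l r) (fib2 j l r); rewrite !adeg_diag; lia.
Qed.

Lemma diag_fiber_cover2 d0 d1 (B0 : config (m * n) d0) (B1 : config (m * n) d1) :
  (forall i p j l, adeg B0 (diag i p j l) =1 adeg B0 (diag i p l j) \/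
                   adeg B1 (diag i p j l) =1 adeg B1 (diag i p l j)) ->
  (forall i p j l, adeg B0 (diag i p j l) =1 adeg B0 (diag i p l j)) \/
  (forall i p j l, adeg B1 (diag i p j l) =1 adeg B1 (diag i p l j)).
Proof.
move=> cover; apply: per_cover2 (diag_fiber_row_per B0) (diag_fiber_row_per B1) _ => i p.
exact: per_cover2 (diag_fiber_col_per B0 i p) (diag_fiber_col_per B1 i p) (cover i p).
Qed.

Lemma toric_ideal_Kmn_sub (K : fieldType) d (B : config (m * n) d) :
  (forall i p j l, adeg B (diag i p j l) =1 adeg B (diag i p l j)) ->
  forall f : {mpoly K[m * n]}, toric_ideal KA f -> toric_ideal B f.
Proof.
move=> Bfib; apply: toric_ideal_Kmn_ind => [|f g|c f|w i p j l].
- exact: toric_ideal0.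
- exact: toric_idealD.
- exact: toric_idealZ.
by apply/toric_ideal_binomialP => r; rewrite [LHS]adegD [RHS]adegD (Bfib i p j l r).
Qed.

Lemma Kmn_lower_bound (K : fieldType) s (J : 'I_s -> {mpoly K[m * n]} -> Prop) :
  (1 < m)%N -> (1 < n)%N ->
  (forall c, is_toric (J c)) -> (forall c, ~ same_set (J c) (toric_ideal KA)) ->
  (forall c f, J c f -> toric_ideal KA f) ->
  (forall f, toric_ideal KA f -> Defs.rad (ideal_sum J) f) -> (3 <= s)%N.
Proof.
move=> m_gt1 n_gt1 Jtoric Jproper JKA KAJ.
have minor_in i p j l : i != p -> j != l -> exists c, J c (minor K i p j l).
  move=> ip jl; apply: Kmn_minor_in_some => //.
  exact/KAJ/toric_ideal_binomialP/diag_fiber.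
case: s J Jtoric Jproper JKA KAJ minor_in => [|s] J Jtoric Jproper JKA KAJ minor_in.
  pose i0 := Ordinal (ltnW m_gt1); pose i1 := Ordinal m_gt1.
  by have [[]] := minor_in i0 i1 (Ordinal n_gt0) (Ordinal n_gt1) isT isT.
rewrite ltnNge; apply/negP => s_le1.
have c01 (c : 'I_s.+1) : c = ord0 \/ c = ord_max.
  by case: c => [[|c'] lt_c]; [left|right]; apply: val_inj => /=; lia.
have not_all c d (B : config (m * n) d) : same_set (J c) (toric_ideal B) ->
    ~ forall i p j l, adeg B (diag i p j l) =1 adeg B (diag i p l j).
  move=> JB Bfib; apply: (Jproper c) => f; split; first exact: JKA.
  by move=> /(toric_ideal_Kmn_sub Bfib) /(JB f).2.
case: (Jtoric ord0) => d0 [B0 [_ JB0]]; case: (Jtoric ord_max) => d1 [B1 [_ JB1]].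
have [] := @diag_fiber_cover2 _ _ B0 B1; [|exact: not_all JB0|exact: not_all JB1].
move=> i p j l; have [->|ip] := eqVneq i p; first by left => r; rewrite !adeg_diag addrC.
have [->|jl] := eqVneq j l; first by left.
have [c] := minor_in i p j l ip jl.
by case: (c01 c) => -> => [/(JB0 _).1|/(JB1 _).1] /(toric_ideal_binomialP K); [left|right].
Qed.

Lemma diag_at_idx i p j l i' j' :
  diag i p j l (idx i' j') = ((i == i') && (j == j') + (p == i') && (l == j'))%N.
Proof. by rewrite mnmDE !mnm1E !idx_inj. Qed.

Lemma mark_Kmn_proper (K : fieldType) k : (1 < m)%N -> (1 < n)%N ->
  ~ same_set (toric_ideal (mark_config KA k)) (@toric_ideal K _ _ KA).
Proof.
move=> m_gt1 n_gt1; rewrite -(idx_krow_kcol k); move: (krow k) (kcol k) => i j same.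
have [p pi] := exists_neq_ord i m_gt1; have [l lj] := exists_neq_ord j n_gt1.
have /(same _).2 : toric_ideal KA (minor K i p j l) by apply/toric_ideal_binomialP/diag_fiber.
case/toric_ideal_binomialP/adeg_markP => _.
by rewrite !diag_at_idx !eqxx (negbTE pi) (negbTE lj).
Qed.

Lemma Kmn_star3 : (0 < m)%N -> (2 < m)%N || (2 < n)%N ->
  exists a : 'I_3 -> 'I_(m * n), forall i p j l,
    exists c, diag i p j l (a c) = 0%N /\ diag i p l j (a c) = 0%N.
Proof.
move=> m_gt0 big; have [n_gt2|n_le2] := ltnP 2 n.
  exists (fun c => idx (Ordinal m_gt0) (widen_ord n_gt2 c)) => i p j l.
  have [|c /andP[cj cl]] := inj_avoid2 j l (s := widen_ord n_gt2).
    by move=> x y e; apply: val_inj; have := congr1 val e.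
  by exists c; rewrite !diag_at_idx ![_ == widen_ord _ _]eq_sym (negbTE cj) (negbTE cl) !andbF.
have m_gt2 : (2 < m)%N by case/orP: big => //; rewrite ltnNge n_le2.
exists (fun c => idx (widen_ord m_gt2 c) (Ordinal n_gt0)) => i p j l.
have [|c /andP[ci cp]] := inj_avoid2 i p (s := widen_ord m_gt2).
  by move=> x y e; apply: val_inj; have := congr1 val e.
by exists c; rewrite !diag_at_idx ![_ == widen_ord _ _]eq_sym (negbTE ci) (negbTE cp).
Qed.

Section MarkedCover.
Variables (K : fieldType) (a : 'I_3 -> 'I_(m * n)).
Hypothesis a_avoid :
  forall i p j l, exists c, diag i p j l (a c) = 0%N /\ diag i p l j (a c) = 0%N.

Definition marked_ideal c : {mpoly K[m * n]} -> Prop := toric_ideal (mark_config KA (a c)).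

Lemma marked_ideal_toric c : is_toric (marked_ideal c).
Proof.
exists (m + n).+1, (mark_config KA (a c)); split=> //.
exact/mark_config_pointed/Kmn_config_pointed.
Qed.

Lemma Kmn_marked_sum f : toric_ideal KA f <-> ideal_sum marked_ideal f.
Proof.
split; last first.
  case=> g [gJ ->]; apply: (big_ind (toric_ideal KA)) => [|x y|c _].
  - exact: toric_ideal0.
  - exact: toric_idealD.
  - exact: toric_ideal_mark_sub (gJ c).
apply: toric_ideal_Kmn_ind => [|f1 f2 [g1 [g1J ->]] [g2 [g2J ->]]|r f1 [g [gJ ->]]|w i p j l].
- by exists (fun=> 0); split=> [c|]; [exact: toric_ideal0 | rewrite big1].
- exists (fun c => g1 c + g2 c); split=> [c|]; last by rewrite big_split.
  exact: toric_idealD (g1J c) (g2J c).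
- exists (fun c => r *: g c); split=> [c|]; last by rewrite scaler_sumr.
  exact: toric_idealZ (gJ c).
have [c [jl_c lj_c]] := a_avoid i p j l.
apply: (ideal_sum_single (c := c)) => [c'|]; first exact: toric_ideal0.
apply/toric_ideal_binomialP/adeg_markP; split; last by rewrite [LHS]mnmDE [RHS]mnmDE jl_c lj_c.
by move=> r; rewrite [LHS]adegD [RHS]adegD (diag_fiber i p j l r).
Qed.

End MarkedCover.
End Kmn.

Lemma Kmn_splits_into3 (K : fieldType) m n :
  (1 < m)%N -> (1 < n)%N -> (2 < m)%N || (2 < n)%N ->
  splits_into (@toric_ideal_Kmn K m n) 3 /\ rad_splits_into (@toric_ideal_Kmn K m n) 3.
Proof.
move=> m_gt1 n_gt1 big; have n_gt0 := ltnW n_gt1.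
have [a a_avoid] := Kmn_star3 n_gt0 (ltnW m_gt1) big.
have sum := Kmn_marked_sum (K := K) a_avoid.
have proper c := @mark_Kmn_proper m n n_gt0 K (a c) m_gt1 n_gt1.
have toric c : is_toric (@marked_ideal m n K a c) by apply: marked_ideal_toric.
split; exists (@marked_ideal m n K a); split=> //; split=> //.
move=> f; split=> [/sum If | [k /sum]]; first by exists 1%N; rewrite expr1.
exact/toric_ideal_radical/Kmn_config_ge0.
Qed.

Lemma Kmn_split_ge3 (K : fieldType) m n s : (1 < m)%N -> (1 < n)%N ->
  splits_into (@toric_ideal_Kmn K m n) s -> (3 <= s)%N.
Proof.
move=> m_gt1 n_gt1 [J [Jtoric [Jproper IJ]]]; have J0 c : J c 0 by apply: is_toric0.
apply: (Kmn_lower_bound (ltnW n_gt1) m_gt1 n_gt1 Jtoric Jproper) => [c f Jf | f /IJ If].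
  exact/IJ/(ideal_sum_single J0 Jf).
by exists 1%N; rewrite expr1.
Qed.

Lemma Kmn_rad_split_ge3 (K : fieldType) m n s : (1 < m)%N -> (1 < n)%N ->
  rad_splits_into (@toric_ideal_Kmn K m n) s -> (3 <= s)%N.
Proof.
move=> m_gt1 n_gt1 [J [Jtoric [Jproper IJ]]]; have J0 c : J c 0 by apply: is_toric0.
apply: (Kmn_lower_bound (ltnW n_gt1) m_gt1 n_gt1 Jtoric Jproper) => [c f Jf | f /IJ //].
by apply/IJ; exists 1%N; rewrite expr1; apply: ideal_sum_single J0 Jf.
Qed.

Local Close Scope ring_scope.
Unset Implicit Arguments.

Theorem theorem3p3 (K : fieldType) (m n : nat) :
  (2 <= m)%N -> (2 <= n)%N -> (m, n) <> (2%N, 2%N) ->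
  Split_eq (@toric_ideal_Kmn K m n) 3 /\ Split_rad_eq (@toric_ideal_Kmn K m n) 3.
Proof.
move=> m_gt1 n_gt1 mn22.
have big : (2 < m) || (2 < n).
  by apply: contra_notT mn22; rewrite negb_or -!leqNgt => /andP[? ?]; congr pair; lia.
have [split3 rad_split3] := Kmn_splits_into3 K m_gt1 n_gt1 big.
by split; split=> // s; [apply: Kmn_split_ge3 | apply: Kmn_rad_split_ge3].
Qed.
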